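(* Let $n,g,k,t,u$ be positive integers. If there exist a large set of H-designs LH$(n,g,k,t)$ and an orthogonal array OA$(t,k,u)$, then there exists a large set of H-designs LH$(n,gu,k,t)$.
   Context: An H-design H$(n,g,k,t)$ is a triple $(Q,G,B)$ where $Q$ is a set of $ng$ points, $G$ is a partition of $Q$ into $n$ groups of size $g$, and $B$ is a set of $k$-subsets of $Q$ (blocks) such that each block meets each group in at most one point and any $t$ points from $t$ distinct groups lie in exactly one block. A large set of H-designs LH$(n,g,k,t)$ is a partition of the set of all $k$-subsets of $Q$ meeting each group of $G$ in at most one point into pairwise disjoint block sets, each of which forms (with $Q$ and $G$) an H-design H$(n,g,k,t)$. An orthogonal array OA$(t,k,u)$ is a $u^t\times k$ matrix with entries from $\mathbb{Z}_u$ such that in the submatrix formed by any $t$ columns each ordered $t$-tuple over $\mathbb{Z}_u$ occurs exactly once as a row. *)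

From mathcomp Require Import all_boot all_order all_algebra.
Set Implicit Arguments. Unset Strict Implicit. Unset Printing Implicit Defensive.

(* Canonical model of (Q, G): Q = 'I_n * 'I_g (ng points), and the group of
   a point x is its first coordinate x.1, so G has n groups of size g. *)
Definition hpoint (n g : nat) := ('I_n * 'I_g)%type.

Definition transverse (n g : nat) (S : {set hpoint n g}) : bool :=
  [forall x in S, forall y in S, (x.1 == y.1) ==> (x == y)].

Definition transverse_ksets (n g k : nat) : {set {set hpoint n g}} :=
  [set S | transverse S & #|S| == k].

Definition H_design (n g k t : nat) (B : {set {set hpoint n g}}) : Prop :=
  (forall b, b \in B -> (#|b| == k) && transverse b) /\
  (forall T : {set hpoint n g}, transverse T -> #|T| = t ->
     #|[set b in B | T \subset b]| = 1).

Definition large_set_H (n g k t : nat) (L : {set {set {set hpoint n g}}}) : Prop :=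
  partition L (transverse_ksets n g k) /\
  (forall B, B \in L -> H_design k t B).

Definition exists_LH (n g k t : nat) : Prop :=
  exists L : {set {set {set hpoint n g}}}, large_set_H k t L.

Definition OA (t k u : nat) (A : 'M['I_u]_(u ^ t, k)) : Prop :=
  forall (c : {ffun 'I_t -> 'I_k}) (v : {ffun 'I_t -> 'I_u}),
    injectiveb c ->
    #|[set r : 'I_(u ^ t) | [forall i, A r (c i) == v i]]| = 1.

Definition exists_OA (t k u : nat) : Prop :=
  exists A : 'M['I_u]_(u ^ t, k), OA A.

From mathcomp Require Import all_boot all_order all_algebra.
Set Implicit Arguments. Unset Strict Implicit. Unset Printing Implicit Defensive.
Import GRing.Theory.

(* Write a point of the design with [g * u] points per group as a pair [(p, s)]
   of a point [p] of the design with [g] points per group and a symbol [s] of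
   [Z_u].  A transverse [k]-set upstairs is then a transverse [k]-set [b]
   downstairs together with a word [z] of [Z_u^k], [z j] being the symbol on
   the [j]-th group met by [b].  Fix [t] columns [C0] of the OA(t,k,u) [A]:
   every word is uniquely [A r + w] with [w] vanishing on [C0].  For every
   block set [B] of the given large set and every such [w], the sets lying
   above a block of [B] with a word [A r + w] form an H-design: a transverse
   [t]-set [T] lies above a unique block [b] of [B], and the symbols of [T]
   prescribe [A r] on [t] distinct columns, which determines [r].
   The degenerate cases need no OA: for [n < t] the design condition is
   vacuous, and otherwise an LH(n,g,k,t) forces [t <= k]. *)

Lemma exists_subset_card (T : finType) m : m <= #|T| -> exists A : {set T}, #|A| = m.
Proof.
move=> m_le_T; have /card_gt0P[A] : 0 < #|[set A : {set T} | #|A| == m]|.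
  by rewrite card_draws bin_gt0.
by rewrite inE => /eqP; exists A.
Qed.

Section Transversals.
Variables n g : nat.
Implicit Types S : {set hpoint n g}.

Definition groups S : {set 'I_n} := [set p.1 | p in S].

Lemma transverseP S :
  reflect {in S &, forall x y, x.1 = y.1 -> x = y} (transverse S).
Proof.
apply: (iffP forall_inP) => [tS x y xS yS /eqP exy | tS x xS].
  by have /forall_inP/(_ y yS)/implyP/(_ exy)/eqP := tS x xS.
by apply/forall_inP => y yS; apply/implyP => /eqP/(tS x y xS yS)->.
Qed.

Lemma card_groups S : transverse S -> #|groups S| = #|S|.
Proof. by move/transverseP; apply: card_in_imset. Qed.

Lemma transverse_card_le S : transverse S -> #|S| <= n.
Proof. by move/card_groups <-; apply: leq_trans (max_card _) _; rewrite card_ord. Qed.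

Lemma exists_transverse m : 0 < g -> m <= n ->
  exists2 S : {set hpoint n g}, transverse S & #|S| = m.
Proof.
move=> g_gt0 m_le_n; have [G card_G] : exists G : {set 'I_n}, #|G| = m.
  by apply: exists_subset_card; rewrite card_ord.
have pair_inj : injective (fun i : 'I_n => (i, Ordinal g_gt0)) by move=> i j [].
exists [set (i, Ordinal g_gt0) | i in G]; last by rewrite card_imset.
by apply/transverseP => _ _ /imsetP[i _ ->] /imsetP[j _ ->] /= ->.
Qed.

End Transversals.

Section Columns.
Variables (n k : nat) (k0 : 'I_k).
Implicit Types G : {set 'I_n}.

(* [k0] is a junk value, never reached when [#|G| = k] and [i \in G]. *)
Definition col_of G (i : 'I_n) : 'I_k := insubd k0 (index i (enum G)).

Lemma col_ofE G i : #|G| = k -> i \in G -> val (col_of G i) = index i (enum G).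
Proof.
by move=> cardG iG; rewrite insubdK // -topredE /= -cardG cardE index_mem mem_enum.
Qed.

Lemma col_of_inj G : #|G| = k -> {in G &, injective (col_of G)}.
Proof.
move=> cardG i j iG jG /(congr1 val); rewrite !col_ofE //.
by move/(index_inj i); apply; rewrite mem_enum.
Qed.

Lemma imset_col_of G : #|G| = k -> col_of G @: G = [set: 'I_k].
Proof.
move=> cardG; apply/eqP; rewrite eqEcard subsetT cardsT card_ord.
by rewrite card_in_imset ?cardG ?leqnn //; apply: col_of_inj.
Qed.

End Columns.

Lemma OA_row_unique t k u (A : 'M['I_u]_(u ^ t, k)) (C : {set 'I_k})
    (v : 'I_k -> 'I_u) :
  OA A -> #|C| = t ->
  exists r, forall r', {in C, forall j, A r' j = v j} <-> r' = r.
Proof.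
move=> oaA cardC; pose c := [ffun i => enum_val (cast_ord (esym cardC) i)].
have c_inj : injectiveb c.
  by apply/injectiveP => i j; rewrite !ffunE => /enum_val_inj/cast_ord_inj.
have imset_c : c @: setT = C.
  apply/setP => j; apply/imsetP/idP => [[i _ ->] | jC]; first by rewrite ffunE enum_valP.
  by exists (cast_ord cardC (enum_rank_in jC j)); rewrite // ffunE cast_ordK enum_rankK_in.
have /eqP/cards1P[r rows_r] := oaA c [ffun i => v (c i)] c_inj.
exists r => r'; have /setP/(_ r') := rows_r; rewrite !inE -imset_c => rows_r'.
split => [row_r' | /eqP]; [apply/eqP | ]; rewrite -rows_r'.
  by apply/forallP => i; rewrite [X in _ == X]ffunE row_r' ?imset_f.
move=> /forallP row_r' _ /imsetP[i _ ->].
by have /eqP := row_r' i; rewrite [X in _ = X -> _]ffunE.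
Qed.

Section Lifting.
Variables (n g u' k : nat) (k0 : 'I_k).
Local Notation u := u'.+1.
Local Notation P := (hpoint n g).
Local Notation Q := (hpoint n (g * u)).
Implicit Types (p : P) (q : Q) (b : {set P}) (S T : {set Q}) (z : {ffun 'I_k -> 'I_u}).

(* [Q] is [P] with every point split into [u] symbols, through the bijection
   [mxvec_index] between ['I_g * 'I_u] and ['I_(g * u)]. *)
Definition unvec_index (c : 'I_(g * u)) : 'I_g * 'I_u :=
  enum_val (cast_ord (esym (mxvec_cast g u)) c).

Definition pt p (s : 'I_u) : Q := (p.1, mxvec_index p.2 s).
Definition base q : P := (q.1, (unvec_index q.2).1).
Definition sym q : 'I_u := (unvec_index q.2).2.

Lemma base_pt p s : base (pt p s) = p.
Proof. by case: p => i a; rewrite /base /unvec_index cast_ordK enum_rankK. Qed.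

Lemma sym_pt p s : sym (pt p s) = s.
Proof. by rewrite /sym /unvec_index cast_ordK enum_rankK. Qed.

Lemma pt_base_sym q : pt (base q) (sym q) = q.
Proof.
case: q => i c; rewrite /pt /base /sym /=; congr (_, _).
by case/mxvec_indexP: c => a s; rewrite /unvec_index cast_ordK enum_rankK.
Qed.

Lemma base_inj S : transverse S -> {in S &, injective base}.
Proof. by move/transverseP => tS x y xS yS /(congr1 fst); apply: tS. Qed.

Lemma transverse_base S : transverse S -> transverse (base @: S).
Proof.
move/transverseP => tS.
by apply/transverseP => _ _ /imsetP[x xS ->] /imsetP[y yS ->] /(tS x y xS yS) ->.
Qed.

Lemma card_base S : transverse S -> #|base @: S| = #|S|.
Proof. by move/base_inj/card_in_imset. Qed.

Lemma groups_base S : groups (base @: S) = groups S.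
Proof. by rewrite /groups -imset_comp. Qed.

Definition lift_block b z : {set Q} :=
  [set pt p (z (col_of k0 (groups b) p.1)) | p in b].

Lemma mem_lift_block b z q :
  (q \in lift_block b z) = (base q \in b) && (z (col_of k0 (groups b) q.1) == sym q).
Proof.
apply/imsetP/andP => [[p pb ->] | [qb /eqP zq]]; first by rewrite base_pt sym_pt.
by exists (base q); rewrite // zq pt_base_sym.
Qed.

Lemma base_lift_block b z : base @: lift_block b z = b.
Proof.
apply/setP => p; apply/imsetP/idP => [[q] | pb].
  by rewrite mem_lift_block => /andP[? _] ->.
by exists (pt p (z (col_of k0 (groups b) p.1))); [apply: imset_f | rewrite base_pt].
Qed.

Lemma lift_block_transverse b z : transverse b -> transverse (lift_block b z).
Proof.
move/transverseP => tb.
by apply/transverseP => _ _ /imsetP[p pb ->] /imsetP[p' p'b ->] /(tb p p' pb p'b) ->.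
Qed.

Lemma card_lift_block b z : #|lift_block b z| = #|b|.
Proof. by apply: card_in_imset => p p' _ _ /(congr1 base); rewrite !base_pt. Qed.

Lemma lift_block_inj b : #|groups b| = k -> injective (lift_block b).
Proof.
move=> card_b z z' eq_lift; apply/ffunP => j.
have /imsetP[_ /imsetP[p pb ->] ->] : j \in col_of k0 (groups b) @: groups b.
  by rewrite imset_col_of ?inE.
have : pt p (z (col_of k0 (groups b) p.1)) \in lift_block b z'.
  by rewrite -eq_lift; apply: imset_f.
by rewrite mem_lift_block sym_pt base_pt pb => /eqP ->.
Qed.

Lemma subset_lift_block b z T :
  (T \subset lift_block b z) =
  (base @: T \subset b) && [forall q in T, z (col_of k0 (groups b) q.1) == sym q].
Proof.
apply/subsetP/andP => [T_lift | [/subsetP Tb /forall_inP zT] q qT].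
  split; last by apply/forall_inP => q /T_lift; rewrite mem_lift_block => /andP[].
  by apply/subsetP => _ /imsetP[q /T_lift + ->]; rewrite mem_lift_block => /andP[].
by rewrite mem_lift_block Tb ?imset_f ?zT.
Qed.

Lemma exists_symbol_word (G : {set 'I_n}) S :
  #|G| = k -> groups S \subset G -> transverse S ->
  exists z, {in S, forall q, z (col_of k0 G q.1) = sym q}.
Proof.
move=> card_G /subsetP SG /transverseP tS.
pose z := [ffun j =>
  if [pick q in S | col_of k0 G q.1 == j] is Some q then sym q else 0%R].
exists z => q qS; rewrite ffunE; case: pickP => [q' /andP[q'S /eqP col_q'] | no_q].
  by rewrite (tS q' q) //; apply: (col_of_inj card_G _ _ col_q'); apply/SG/imset_f.
by have := no_q q; rewrite qS eqxx.
Qed.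

Lemma lift_block_base S :
  transverse S -> #|S| = k -> exists z, S = lift_block (base @: S) z.
Proof.
move=> tS card_S; have card_G : #|groups S| = k by rewrite card_groups.
have [z zS] := exists_symbol_word card_G (subxx _) tS.
exists z; apply/setP => q; rewrite mem_lift_block groups_base.
apply/idP/andP => [qS | [/imsetP[q' q'S base_q] /eqP zq]]; first by rewrite zS ?imset_f.
have eq_group : q.1 = q'.1 by rewrite -[q.1]/((base q).1) base_q.
by rewrite -(pt_base_sym q) -zq eq_group zS // base_q pt_base_sym.
Qed.

End Lifting.

Arguments base {n g u'} q.
Arguments sym {n g u'} q.

Section LargeSets.
Variables (n g k t : nat) (L : {set {set {set hpoint n g}}}).
Hypothesis LH_L : large_set_H k t L.

Lemma cover_large_set : cover L = transverse_ksets n g k.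
Proof. by case: LH_L => /and3P[/eqP]. Qed.

Lemma large_set_block B b : B \in L -> b \in B -> transverse b /\ #|b| = k.
Proof.
move=> BL bB; have : b \in cover L by apply/bigcupP; exists B.
by rewrite cover_large_set inE => /andP[-> /eqP].
Qed.

Lemma large_set_block_uniq B B' b : B \in L -> B' \in L -> b \in B -> b \in B' -> B = B'.
Proof.
have [/and3P[_ trivL _] _] := LH_L.
by move=> BL B'L bB bB'; rewrite -(def_pblock trivL BL bB) (def_pblock trivL B'L bB').
Qed.

Lemma large_set_t_le_k : 0 < g -> t <= n -> t <= k.
Proof.
move=> g_gt0 t_le_n; case: (leqP t k) => // k_lt_t.
have [S tS card_S] := exists_transverse g_gt0 (ltnW (leq_trans k_lt_t t_le_n)).
have [T tT card_T] := exists_transverse g_gt0 t_le_n.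
have : S \in cover L by rewrite cover_large_set inE tS card_S eqxx.
case/bigcupP => B BL _; have [_ design_L] := LH_L.
have /eqP/cards1P[b bT] := (design_L B BL).2 T tT card_T.
have /setP/(_ b) := bT; rewrite !inE eqxx => /andP[bB Tb].
have [_ card_b] := large_set_block BL bB.
by have := subset_leq_card Tb; rewrite card_T card_b leqNgt k_lt_t.
Qed.

End LargeSets.

Lemma exists_LH_small n g k t : n < t -> exists_LH n g k t.
Proof.
move=> n_lt_t; exists (preim_partition (fun=> tt) (transverse_ksets n g k)).
split=> [|_ /imsetP[S _ ->]]; first exact: preim_partitionP.
split=> [b | T /transverse_card_le + card_T]; last by rewrite card_T leqNgt n_lt_t.
by rewrite !inE andbT andbC.
Qed.

Section Construction.
Variables (n g u' k t : nat) (k0 : 'I_k).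
Local Notation u := u'.+1.
Local Notation P := (hpoint n g).
Local Notation Q := (hpoint n (g * u)).
Variable A : 'M['I_u]_(u ^ t, k).
Hypothesis oaA : OA A.
Variable C0 : {set 'I_k}.
Hypothesis card_C0 : #|C0| = t.
Implicit Types (r : 'I_(u ^ t)) (w z : {ffun 'I_k -> 'I_u}) (b : {set P}) (T : {set Q}).

Definition shifted_row r w : {ffun 'I_k -> 'I_u} := [ffun j => A r j + w j]%R.

Definition shifts : {set {ffun 'I_k -> 'I_u}} :=
  [set w : {ffun 'I_k -> 'I_u} | [forall j in C0, w j == 0%R]].

Lemma shifted_row_onto z : exists r, exists2 w, w \in shifts & z = shifted_row r w.
Proof.
have [r rP] := OA_row_unique z oaA card_C0.
have zC0 : {in C0, forall j, A r j = z j} by apply/rP.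
exists r, [ffun j => z j - A r j]%R.
  by rewrite inE; apply/forall_inP => j jC0; rewrite ffunE zC0 ?subrr.
by apply/ffunP => j; rewrite !ffunE addrC subrK.
Qed.

Lemma shifted_row_inj r r' w w' : w \in shifts -> w' \in shifts ->
  shifted_row r w = shifted_row r' w' -> r = r' /\ w = w'.
Proof.
rewrite !inE => /forall_inP w0 /forall_inP w'0 /ffunP eq_rows.
have [r0 r0P] := OA_row_unique (A r) oaA card_C0.
have r_r' : r = r'.
  rewrite (r0P r).1 // -(r0P r').1 // => j jC0.
  by have := eq_rows j; rewrite !ffunE (eqP (w0 j jC0)) (eqP (w'0 j jC0)) !addr0.
by split=> //; apply/ffunP => j; have := eq_rows j; rewrite !ffunE r_r' => /addrI.
Qed.

Lemma lift_shifted_row_unique b w T : #|groups b| = k ->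
  transverse T -> #|T| = t -> base @: T \subset b ->
  exists r0, forall r, T \subset lift_block k0 b (shifted_row r w) <-> r = r0.
Proof.
move=> card_b tT card_T Tb; set G := groups b.
have TG : groups T \subset G by rewrite -groups_base imsetS.
have [zT zTP] := exists_symbol_word k0 card_b TG tT.
have card_C : #|col_of k0 G @: groups T| = t.
  rewrite card_in_imset ?card_groups //.
  by apply: sub_in2 (col_of_inj card_b) => i /(subsetP TG).
have [r0 r0P] := OA_row_unique (fun j => zT j - w j)%R oaA card_C.
exists r0 => r; rewrite subset_lift_block Tb; apply: iff_trans (r0P r).
split=> [/forall_inP rowT _ /imsetP[_ /imsetP[q qT ->] ->] | rowC].
  by have /eqP := rowT q qT; rewrite ffunE -(zTP q qT) => <-; rewrite addrK.
by apply/forall_inP => q qT; rewrite ffunE rowC ?zTP ?subrK // imset_f ?imset_f.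
Qed.

Variable L : {set {set {set P}}}.
Hypothesis LH_L : large_set_H k t L.

Definition lifted_blocks (B : {set {set P}}) w : {set {set Q}} :=
  [set lift_block k0 b (shifted_row r w) | b in B, r in 'I_(u ^ t)].

Definition lifted_large_set : {set {set {set Q}}} :=
  [set lifted_blocks B w | B in L, w in shifts].

Lemma lifted_H_design B w : B \in L -> H_design k t (lifted_blocks B w).
Proof.
move=> BL; have [_ /(_ B BL)[_ design_B]] := LH_L.
split=> [_ /imset2P[b r bB _ ->] | T tT card_T].
  have [tb card_b] := large_set_block LH_L BL bB.
  by rewrite card_lift_block card_b eqxx lift_block_transverse.
have card_baseT : #|base @: T| = t by rewrite card_base.
have /eqP/cards1P[b0 b0P] := design_B _ (transverse_base tT) card_baseT.
have /setP/(_ b0) := b0P; rewrite !inE eqxx => /andP[b0B Tb0].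
have [tb0 card_b0] := large_set_block LH_L BL b0B.
have card_G0 : #|groups b0| = k by rewrite card_groups.
have [r0 r0P] := lift_shifted_row_unique w card_G0 tT card_T Tb0.
apply/eqP/cards1P; exists (lift_block k0 b0 (shifted_row r0 w)); apply/setP => S.
rewrite !inE; apply/andP/eqP => [[/imset2P[b r bB _ ->] T_lift] | ->].
  have b_b0 : b = b0.
    have /setP/(_ b) := b0P; rewrite !inE bB /=.
    by move: T_lift; rewrite subset_lift_block => /andP[-> _] /esym/eqP.
  by move: T_lift; rewrite b_b0 => /r0P ->.
by split; [apply/imset2P; exists b0 r0 | apply/r0P].
Qed.

Lemma lifted_blocks_uniq B B' w w' S :
  B \in L -> B' \in L -> w \in shifts -> w' \in shifts ->
  S \in lifted_blocks B w -> S \in lifted_blocks B' w' -> B = B' /\ w = w'.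
Proof.
move=> BL B'L wW w'W /imset2P[b r bB _ ->] /imset2P[b' r' b'B _ eq_S].
have b_b' : b = b'.
  by rewrite -(base_lift_block k0 b (shifted_row r w)) eq_S base_lift_block.
subst b'; have [tb card_b] := large_set_block LH_L BL bB.
have card_G : #|groups b| = k by rewrite card_groups.
have /(lift_block_inj card_G)/(shifted_row_inj wW w'W)[_ <-] := eq_S.
by rewrite (large_set_block_uniq LH_L BL B'L bB b'B).
Qed.

Lemma cover_lifted_large_set : cover lifted_large_set = transverse_ksets n (g * u) k.
Proof.
apply/setP => S; rewrite inE.
apply/bigcupP/andP => [[_ /imset2P[B w BL _ ->]] | [tS /eqP card_S]].
  case/imset2P => b r bB _ ->; have [tb card_b] := large_set_block LH_L BL bB.
  by rewrite card_lift_block card_b lift_block_transverse.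
have [z S_lift] := lift_block_base k0 tS card_S.
have : base @: S \in cover L.
  by rewrite (cover_large_set LH_L) inE transverse_base // card_base // card_S eqxx.
case/bigcupP => B BL SB; have [r [w wW z_row]] := shifted_row_onto z.
exists (lifted_blocks B w); first by apply/imset2P; exists B w.
by apply/imset2P; exists (base @: S) r; rewrite // -z_row.
Qed.

Lemma lifted_large_set_partition :
  partition lifted_large_set (transverse_ksets n (g * u) k).
Proof.
apply/and3P; split; first by rewrite cover_lifted_large_set.
  apply/trivIsetP => _ _ /imset2P[B w BL wW ->] /imset2P[B' w' B'L w'W ->] neq.
  rewrite -setI_eq0; apply/set0Pn => -[S /setIP[S1 S2]]; move/eqP: neq; apply.
  by have [-> ->] := lifted_blocks_uniq BL B'L wW w'W S1 S2.
apply/imset2P => -[B w BL _ /esym/setP no_block].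
have [[/and3P[_ _ L_neq0] _] rows_gt0] := (LH_L, expn_gt0 u t).
have [b bB] : exists b, b \in B by apply/set0Pn; apply: contraNneq L_neq0 => <-.
have := no_block (lift_block k0 b (shifted_row (Ordinal rows_gt0) w)).
by rewrite in_set0 => /negbT/negP; apply; apply/imset2P; exists b (Ordinal rows_gt0).
Qed.

Lemma lifted_large_set_H : large_set_H k t lifted_large_set.
Proof.
split=> [|_ /imset2P[B w BL wW ->]]; first exact: lifted_large_set_partition.
exact: lifted_H_design.
Qed.

End Construction.

Lemma exists_LH_mul n g u k t : 0 < k -> t <= k ->
  exists_LH n g k t -> exists_OA t k u.+1 -> exists_LH n (g * u.+1) k t.
Proof.
move=> k_gt0 t_le_k [L LH_L] [A oaA].
have [C0 card_C0] : exists C0 : {set 'I_k}, #|C0| = t.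
  by apply: exists_subset_card; rewrite card_ord.
by exists (lifted_large_set (Ordinal k_gt0) A C0 L); apply: lifted_large_set_H.
Qed.

Theorem theorem4 (n g k t u : nat) :
  0 < n -> 0 < g -> 0 < k -> 0 < t -> 0 < u ->
  exists_LH n g k t -> exists_OA t k u -> exists_LH n (g * u) k t.
Proof.
move=> _ g_gt0 k_gt0 _ u_gt0 LH_ngkt OA_tku.
have [n_lt_t | t_le_n] := ltnP n t; first exact: exists_LH_small.
have [L LH_L] := LH_ngkt.
have t_le_k := large_set_t_le_k LH_L g_gt0 t_le_n.
case: u u_gt0 OA_tku => // u _ OA_tku.
exact: exists_LH_mul.
Qed.
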